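(* Let $C$ be a nonempty closed convex subset of a real Banach space $X$ and let $a\in X$. Then $a$ is a weak internal point of $C$ if and only if $a\in C$ and $C$ is quasi-symmetric with respect to $a$.
   Context: The origin is a weak internal point of a closed convex set $A$ if for every $x\in A$ there exists $\delta=\delta(x)>0$ with $-\delta x\in A$; a point $a$ is a weak internal point of $C$ if the origin is a weak internal point of $C-a$. A closed convex set $A$ containing $0$ is quasi-symmetric if for every $r>0$ there exists $\theta=\theta(r)\in(0,1]$ such that $x\in A$, $\|x\|\le r$ implies $-\theta x\in A$; $C$ is quasi-symmetric with respect to $a\in C$ if $C-a$ is quasi-symmetric. *)

From HB Require Import structures.
From mathcomp Require Import all_boot all_order all_algebra.
From mathcomp Require Import all_classical all_reals all_analysis.
Set Implicit Arguments. Unset Strict Implicit. Unset Printing Implicit Defensive.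
Import Order.TTheory GRing.Theory Num.Theory.
Import numFieldNormedType.Exports.
Local Open Scope classical_set_scope.
Local Open Scope ring_scope.

Definition shift_set {R : realType} {X : normedModType R} (C : set X) (a : X) : set X :=
  [set x - a | x in C].

Definition origin_weak_internal {R : realType} {X : normedModType R} (A : set X) : Prop :=
  forall x, A x -> exists delta : R, 0 < delta /\ A (- (delta *: x)).

Definition weak_internal_point {R : realType} {X : normedModType R} (C : set X) (a : X) : Prop :=
  origin_weak_internal (shift_set C a).

Definition quasi_symmetric {R : realType} {X : normedModType R} (A : set X) : Prop :=
  A 0 /\ forall r : R, 0 < r -> exists theta : R, 0 < theta /\ theta <= 1 /\
    forall x, A x -> `|x| <= r -> A (- (theta *: x)).

Definition quasi_symmetric_wrt {R : realType} {X : normedModType R} (C : set X) (a : X) : Prop :=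
  quasi_symmetric (shift_set C a).

From HB Require Import structures.
From mathcomp Require Import all_boot all_order all_algebra.
From mathcomp Require Import all_classical all_reals all_analysis.
From mathcomp Require Import ring lra.
Set Implicit Arguments. Unset Strict Implicit. Unset Printing Implicit Defensive.
Import Order.TTheory GRing.Theory Num.Theory.
Import numFieldNormedType.Exports.
Local Open Scope classical_set_scope.
Local Open Scope ring_scope.

(* If 0 is a weak internal point of A, then for each r > 0 the closed sets
   F_n := [set w | A (- w / n.+1)] cover the complete metric space
   A `&` closed_ball 0 r, so by Baire one of them contains a relative ball
   around some y.  As A is convex and contains 0, any x of norm at most r can
   be pushed towards y into that ball, and averaging with a multiple of y
   turns the local reflection into a uniform one.  The converse is immediate,
   taking r := `|x| + 1. *)

Lemma closed_avoiding_ball {R : realType} {X : normedModType R} (S F : set X)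
    (y : X) (e d : R) :
  closed F -> 0 < e -> 0 < d -> ~ (forall z, S z -> `|z - y| < e / 2 -> F z) ->
  exists z e', [/\ S z, 0 < e', `|z - y| + e' <= e, e' <= d &
    forall w, `|w - z| <= e' -> ~ F w].
Proof.
move=> cF e_gt0 d_gt0 notF.
have [z [Sz zy nFz]] : exists z, [/\ S z, `|z - y| < e / 2 & ~ F z].
  apply: contrapT => none; apply: notF => z Sz zy.
  by apply: contrapT => nFz; apply: none; exists z.
have : nbhs z (~` F) by apply: open_nbhs_nbhs; split => //; exact: closed_openC.
move=> /nbhs_ballP[r /= r_gt0 rF].
exists z, (Num.min (Num.min (r / 2) (e / 2)) d).
have [le_r le_e le_d] : [/\ Num.min (Num.min (r / 2) (e / 2)) d <= r / 2,
    Num.min (Num.min (r / 2) (e / 2)) d <= e / 2 &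
    Num.min (Num.min (r / 2) (e / 2)) d <= d].
  by split; rewrite !ge_min lexx ?orbT.
split => //; first by rewrite !lt_min !divr_gt0.
- lra.
- move=> w wz; apply: rF; rewrite -ball_normE /ball_ /= distrC; lra.
Qed.

Section Baire_closed.
Context {R : realType} {X : completeNormedModType R}.

Lemma nested_balls_cvg (y : nat -> X) (e : nat -> R) :
  (forall n, 0 < e n) -> (forall n, e n <= n.+1%:R^-1) ->
  (forall n, `|y n.+1 - y n| + e n.+1 <= e n) ->
  exists2 l, y @ \oo --> l & forall n, `|l - y n| <= e n.
Proof.
move=> e_gt0 e_small e_nested.
have telescope n k : `|y (n + k)%N - y n| <= e n - e (n + k)%N.
  elim: k => [|k IH]; first by rewrite addn0 !subrr normr0.
  rewrite addnS -[y _ - y n](subrKA (y (n + k)%N)).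
  apply: (le_trans (ler_normD _ _)).
  have := e_nested (n + k)%N; lra.
have dist_le n m : (n <= m)%N -> `|y m - y n| <= e n.
  move=> /subnKC <-; apply: (le_trans (telescope _ _)).
  by rewrite lerBlDr lerDl ltW.
have : cvg (y @ \oo).
  suff : cauchy (y @ \oo) by exact: cauchy_cvg.
  suff : cauchy_ex (y @ \oo) by exact: cauchy_exP.
  move=> eps eps_gt0; rewrite /fmapE -ball_normE /ball_.
  have [n n_lt] : exists n, n.+1%:R^-1 < eps.
    exists (Num.truncn eps^-1).
    by rewrite -ltf_pV2 ?(posrE, divr_gt0) // invrK truncnS_gt.
  exists (y n), n => // m /= /dist_le le_mn; rewrite distrC.
  exact: le_lt_trans le_mn (le_lt_trans (e_small n) n_lt).
move=> /cvg_ex[l y_l] /=; exists l => // n.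
have : closed_ball (y n) (e n) l.
  apply: (@closed_cvg _ _ \oo eventually_filter y) y_l.
    exact: closed_ball_closed.
  exists n => // m /= /dist_le.
  by rewrite closed_ballE // /closed_ball_ /= distrC.
by rewrite closed_ballE // /closed_ball_ /= distrC.
Qed.

Lemma Baire_closed_subset (S : set X) (F : nat -> set X) :
  closed S -> S !=set0 -> (forall n, closed (F n)) -> S `<=` \bigcup_n F n ->
  exists n y e, [/\ 0 < e, S y & forall z, S z -> `|z - y| < e -> F n z].
Proof.
move=> cS [s0 Ss0] cF cov; apply: contrapT => nowhere.
pose good n (p q : X * R) := [/\ S q.1, 0 < q.2, `|q.1 - p.1| + q.2 <= p.2,
  q.2 <= n.+1%:R^-1 & forall w, `|w - q.1| <= q.2 -> ~ F n w].
(* The guard makes [next] total, so that [choice] yields a step function. *)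
have next : forall p : nat * (X * R), exists q : X * R,
    S p.2.1 /\ 0 < p.2.2 -> good p.1 p.2 q.
  move=> [n [y e]] /=.
  have [[Sy e_gt0]|] := pselect (S y /\ 0 < e); last by exists (y, e).
  have notF : ~ (forall z, S z -> `|z - y| < e / 2 -> F n z).
    by move=> Fn; apply: nowhere; exists n, y, (e / 2); rewrite divr_gt0.
  have n_gt0 : 0 < n.+1%:R^-1 :> R by rewrite invr_gt0.
  have [z [e' ?]] := closed_avoiding_ball (cF n) e_gt0 n_gt0 notF.
  by exists (z, e') => _.
have [f f_good] := choice next.
pose fix u n := if n is m.+1 then f (m, u m) else (s0, 1).
have u_ok n : S (u n).1 /\ 0 < (u n).2.
  elim: n => [|n [Sn en]] //=.
  by have [] := f_good (n, u n) (conj Sn en).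
have u_good n : good n (u n) (u n.+1) := f_good (n, u n) (u_ok n).
have [|||l y_l l_near] := nested_balls_cvg (y := fun n => (u n.+1).1)
  (e := fun n => (u n.+1).2).
- by move=> n; have [] := u_ok n.+1.
- by move=> n; have [] := u_good n.
- by move=> n; have [] := u_good n.+1.
have Sl : S l.
  apply: (@closed_cvg _ _ \oo eventually_filter _) y_l => //.
  by apply: nearW => n; case: (u_ok n.+1).
have [n _ Fnl] := cov l Sl.
have [_ _ _ _ avoidF] := u_good n.
exact: avoidF (l_near n) Fnl.
Qed.

End Baire_closed.

Section shift_set.
Context {R : realType} {X : normedModType R}.
Implicit Types (C : set X) (a : X).

Lemma shift_setE C a w : shift_set C a w <-> C (w + a).
Proof.
split; first by case=> x Cx <-; rewrite subrK.
by move=> Cw; exists (w + a) => //; rewrite addrK.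
Qed.

Lemma closed_shift_set C a : closed C -> closed (shift_set C a).
Proof.
move=> cC; have -> : shift_set C a = (fun w => w + a) @^-1` C.
  by rewrite predeqE => w; rewrite shift_setE.
apply: preimage_closed => // x _.
by apply: continuousD => //; exact: cst_continuous.
Qed.

Lemma convex_shift_set C a :
  convex_set (C : set (convex_lmodType X)) ->
  convex_set (shift_set C a : set (convex_lmodType X)).
Proof.
move=> cvxC x y t /set_mem/shift_setE Cxa /set_mem/shift_setE Cya.
apply/mem_set/shift_setE; have /set_mem := cvxC _ _ t (mem_set Cxa) (mem_set Cya).
congr C; rewrite /conv /= !scalerDr addrACA -scalerDl.
by rewrite unstable.add_onemK scale1r.
Qed.

End shift_set.

Lemma quasi_symmetric_origin_weak_internal {R : realType} {X : normedModType R}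
    (A : set X) :
  quasi_symmetric A -> origin_weak_internal A.
Proof.
move=> [_ qsA] x Ax.
have [theta [theta_gt0 [_ reflA]]] := qsA (`|x| + 1) (ltr_pwDr ltr01 (normr_ge0 x)).
by exists theta; split => //; apply: reflA => //; rewrite lerDl.
Qed.

Section convex_origin.
Context {R : realType} {X : normedModType R} (A : set X).
Hypothesis cvxA : convex_set (A : set (convex_lmodType X)).

Lemma mem_convex_comb x y t : A x -> A y -> 0 <= t <= 1 -> A (t *: x + (1 - t) *: y).
Proof.
move=> Ax Ay /andP[t_ge0 t_le1].
by have /set_mem := cvxA (Itv01 t_ge0 t_le1) (mem_set Ax) (mem_set Ay).
Qed.

Lemma origin_weak_internal_mem0 : A !=set0 -> origin_weak_internal A -> A 0.
Proof.
move=> [x Ax] owA; have [d [d_gt0 Adx]] := owA x Ax.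
have d1_gt0 : 0 < 1 + d by rewrite addr_gt0.
have t01 : 0 <= d / (1 + d) <= 1.
  by rewrite divr_ge0 ?(ltW d_gt0) ?(ltW d1_gt0) // ler_pdivrMr // mul1r lerDr ltW.
have := mem_convex_comb Ax Adx t01.
rewrite scalerN scalerA -scalerBl.
suff -> : d / (1 + d) - (1 - d / (1 + d)) * d = 0 by rewrite scale0r.
by field; rewrite gt_eqF.
Qed.

Hypothesis A0 : A 0.

Lemma convex0_scale x s : A x -> 0 <= s <= 1 -> A (s *: x).
Proof. by move=> Ax /(mem_convex_comb Ax A0); rewrite scaler0 addr0. Qed.

Lemma origin_weak_internal_invn x : origin_weak_internal A -> A x ->
  exists n, A (- (n.+1%:R^-1 *: x)).
Proof.
move=> owA Ax; have [d [d_gt0 Adx]] := owA x Ax.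
have [n n_lt] : exists n, n.+1%:R^-1 < d.
  exists (Num.truncn d^-1).
  by rewrite -ltf_pV2 ?(posrE, divr_gt0) // invrK truncnS_gt.
exists n; have -> : - (n.+1%:R^-1 *: x) = (n.+1%:R^-1 / d) *: - (d *: x).
  by rewrite scalerN scalerA divfK // gt_eqF.
apply: convex0_scale => //.
by rewrite divr_ge0 ?(ltW d_gt0) // ler_pdivrMr // mul1r ltW.
Qed.

(* Push x towards y: z := t x + (1 - t) y is close to y, and - (c t / 2) x is
   the midpoint of - c z and c (1 - t) y. *)
Lemma quasi_symmetric_ball_of_local (y : X) (r e c : R) :
  0 < e -> 0 < c <= 1 -> A y -> `|y| <= r ->
  (forall z, A z -> `|z| <= r -> `|z - y| < e -> A (- (c *: z))) ->
  exists theta, [/\ 0 < theta, theta <= 1 &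
    forall x, A x -> `|x| <= r -> A (- (theta *: x))].
Proof.
move=> e_gt0 /andP[c_gt0 c_le1] Ay ny reflA.
have r_ge0 : 0 <= r := le_trans (normr_ge0 y) ny.
pose t := e / (2 * r + e).
have den_gt0 : 0 < 2 * r + e by lra.
have t_gt0 : 0 < t by rewrite divr_gt0.
have t_le1 : t <= 1 by rewrite ler_pdivrMr // mul1r; lra.
have t_small : t * (2 * r) < e by rewrite mulrAC ltr_pdivrMr //; nra.
clearbody t.
exists (c * t / 2); split; first by rewrite !mulr_gt0.
  by rewrite ler_pdivrMr // mul1r; nra.
move=> x Ax nx; pose z := t *: x + (1 - t) *: y.
have Az : A z by apply: mem_convex_comb => //; rewrite (ltW t_gt0).
have nz : `|z| <= r.
  have t'_ge0 : 0 <= 1 - t by rewrite subr_ge0.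
  apply: (le_trans (ler_normD _ _)).
  rewrite !normrZ (ger0_norm (ltW t_gt0)) (ger0_norm t'_ge0); nra.
have zy : `|z - y| < e.
  have -> : z - y = t *: (x - y) by rewrite /z scalerBl scale1r scalerBr addrCA addrC addrK.
  rewrite normrZ (ger0_norm (ltW t_gt0)); apply: le_lt_trans t_small.
  by rewrite ler_pM2l //; apply: (le_trans (ler_normB _ _)); lra.
have Ay' : A ((c * (1 - t)) *: y) by apply: convex0_scale => //; nra.
have half : (2^-1 : R) *: - (c *: z) + (1 - 2^-1) *: ((c * (1 - t)) *: y)
    = - ((c * t / 2) *: x).
  rewrite /z (_ : 1 - 2^-1 = 2^-1 :> R); last by field.
  rewrite scalerDr opprD scalerDr !scalerA scalerN [2^-1 *: - _]scalerN.
  by rewrite !scalerA subrK mulrC.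
rewrite -half; apply: mem_convex_comb => //; first exact: reflA.
by apply/andP; split; lra.
Qed.

End convex_origin.

Lemma origin_weak_internal_quasi_symmetric {R : realType}
    {X : completeNormedModType R} (A : set X) :
  closed A -> convex_set (A : set (convex_lmodType X)) -> A !=set0 ->
  origin_weak_internal A -> quasi_symmetric A.
Proof.
move=> cA cvxA neA owA; have A0 := origin_weak_internal_mem0 cvxA neA owA.
split => // r r_gt0.
pose S := [set x | A x /\ `|x| <= r].
have cS : closed S.
  have -> : S = A `&` closed_ball 0 r.
    by rewrite predeqE => x; rewrite closed_ballE // /closed_ball_ /= sub0r normrN.
  by apply: closedI => //; exact: closed_ball_closed.
have S0 : S 0 by split; rewrite // normr0 ltW.
pose F n := [set w : X | A (- (n.+1%:R^-1 *: w))].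
have cF n : closed (F n).
  apply: preimage_closed => // x _.
  by apply: continuousN; exact: scaler_continuous.
have cov : S `<=` \bigcup_n F n.
  move=> x [Ax _].
  by have [n ?] := origin_weak_internal_invn cvxA A0 owA Ax; exists n.
have [n [y [e [e_gt0 [Ay ny] locF]]]] := Baire_closed_subset cS (ex_intro _ 0 S0) cF cov.
have c01 : 0 < (n.+1%:R^-1 : R) <= 1.
  by rewrite invr_gt0 ltr0Sn /= invf_le1 ?ler1n ?ltr0Sn.
have [theta [? ? reflA]] := quasi_symmetric_ball_of_local cvxA A0 e_gt0 c01 Ay ny
  (fun z Az nz => locF z (conj Az nz)).
by exists theta.
Qed.

Theorem mainTheorem5 (R : realType) (X : completeNormedModType R) (C : set X) (a : X)
  (hne : C !=set0) (hcl : closed C) (hcv : convex_set (C : set (convex_lmodType X))) :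
  weak_internal_point C a <-> (C a /\ quasi_symmetric_wrt C a).
Proof.
rewrite /weak_internal_point /quasi_symmetric_wrt.
have Ca_shift : C a <-> shift_set C a 0 by rewrite shift_setE add0r.
split => [owA | [_ qsA]]; last exact: quasi_symmetric_origin_weak_internal.
have neA : shift_set C a !=set0.
  by have [c Cc] := hne; exists (c - a); apply/shift_setE; rewrite subrK.
have qsA : quasi_symmetric (shift_set C a).
  apply: origin_weak_internal_quasi_symmetric neA owA.
    exact: closed_shift_set.
  exact: convex_shift_set.
by split => //; apply/Ca_shift; case: qsA.
Qed.
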